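(* Let $G$ be a simple graph with $m$ edges and girth $g(G)\ge 5$. Then the number $p(G;4)$ of $4$-matchings of $G$ equals $$\frac{1}{24}m^4+\frac14 m^3+\frac{19}{24}m^2-\frac{11}{4}m+\frac18 M_1(G)^2+\frac13 mF(G)-\frac14 m^2M_1(G)+mM_2(G)+\frac14 M_1^4(G)-2M_2(G)-\frac54 mM_1(G)+\frac72 M_1(G)-EM_2(G)-\frac32 F(G),$$ where $M_1(G)^2$ is the square of the number $M_1(G)$.
   Context: All graphs are finite, simple and undirected. A $k$-matching is a set of $k$ pairwise vertex-disjoint edges; $p(G;k)$ is the number of $k$-matchings in $G$. $d_G(v)$ is the degree of $v$; the girth is the length of a shortest cycle (infinite if acyclic). $M_1^\alpha(G)=\sum_v d_G(v)^\alpha$ (exponent on degrees), $M_1=M_1^2$, $F=M_1^3$, $M_1^4(G)=\sum_v d_G(v)^4$; $M_2(G)=\sum_{uv\in E(G)}d_G(u)d_G(v)$. For an edge $e=uv$, $d_G(e)=d_G(u)+d_G(v)-2$; $EM_2(G)=\sum_{e\sim f}d_G(e)d_G(f)$, the sum over unordered pairs of distinct edges sharing a vertex. *)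

From mathcomp Require Import all_boot all_order all_algebra.
Set Implicit Arguments. Unset Strict Implicit. Unset Printing Implicit Defensive.
Import GRing.Theory Num.Theory.

(* A finite simple graph: vertex type T : finType, adjacency e : rel T,
   required to be symmetric and irreflexive (hypotheses of the theorem). *)

Section Graph.
Variables (T : finType) (e : rel T).

Definition edges : {set {set T}} :=
  [set A : {set T} | [exists x, exists y, e x y && (A == [set x; y])]].

Definition nedges : nat := #|edges|.

Definition deg (v : T) : nat := #|[set u | e v u]|.

Definition matchings (k : nat) : {set {set {set T}}} :=
  [set M : {set {set T}} | (M \subset edges) && (#|M| == k) &&
     [forall A in M, forall B in M, (A != B) ==> [disjoint A & B]]].

Definition p_match (k : nat) : nat := #|matchings k|.

Definition has_cycle_of_length (k : nat) : Prop :=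
  (3 <= k) /\ exists s : seq T, [/\ size s = k, uniq s & cycle e s].

(* girth >= g : every cycle has length >= g (vacuous for acyclic graphs) *)
Definition girth_ge (g : nat) : Prop :=
  forall k, has_cycle_of_length k -> g <= k.

Local Open Scope ring_scope.

Definition M1pow (a : nat) : rat := \sum_(v : T) ((deg v)%:R ^+ a).
Definition M1 : rat := M1pow 2.
Definition Fidx : rat := M1pow 3.
Definition M14 : rat := M1pow 4.

Definition M2 : rat := \sum_(A in edges) \prod_(v in A) (deg v)%:R.

Definition edeg (A : {set T}) : rat := (\sum_(v in A) (deg v)%:R) - 2.

Definition EM2 : rat :=
  \sum_(P : {set {set T}} | (P \subset edges) && (#|P| == 2%N) &&
                            (\bigcap_(A in P) A != set0))
     \prod_(A in P) edeg A.

End Graph.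

(* Write E for the edge set, m = |E|, and call two edges apart when they are
   vertex-disjoint.  The proof counts the ordered quadruples (A,B,C,D) of
   pairwise apart edges, which is 24 p(G;4), by inclusion-exclusion on the
   "meets" relation (the complement of "apart"):
   - for pairwise apart A,B,C the number of edges D apart from all three is
     m - n(A) - n(B) - n(C) + c(A,B) + c(A,C) + c(B,C), where n(A) counts the
     edges meeting A and c(A,B) those meeting both (no edge meets three
     pairwise apart edges);
   - summing over C in the same way, then over the ordered pairs (A,B), the
     count becomes a polynomial in m, the moments of n, and sums over pairs of
     meeting edges; girth >= 5 is used only to see that c(A,B) is 0 or 1 for
     apart edges and that c({w,a},{w,b}) = d(w) for distinct neighbours a, b;
   - every remaining sum is evaluated by double counting over the stars of
     the vertices, in terms of m, M1, F, M1^4, M2 and two auxiliary vertex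
     sums, which also appear in EM2 and cancel in the final identity. *)

From mathcomp Require Import all_boot all_order all_algebra.
From mathcomp Require Import ring.
Import GRing.Theory Num.Theory.
Set Implicit Arguments. Unset Strict Implicit. Unset Printing Implicit Defensive.
Local Open Scope ring_scope.

Lemma sum_pair (R : nmodType) (U : finType) (x y : U) (F : U -> R) :
  x != y -> \sum_(v in [set x; y]) F v = F x + F y.
Proof. by move=> xy; rewrite big_setU1 ?big_set1 // inE. Qed.

Lemma prod_pair (R : comPzSemiRingType) (U : finType) (x y : U) (F : U -> R) :
  x != y -> \prod_(v in [set x; y]) F v = F x * F y.
Proof. by move=> xy; rewrite big_setU1 ?big_set1 // inE. Qed.

Section FourMatchings.
Variables (T : finType) (e : rel T).
Hypotheses (e_sym : symmetric e) (e_irr : irreflexive e).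

Local Notation E := (edges e).
Local Notation m := ((nedges e)%:R : rat).
Local Notation dg w := ((deg e w)%:R : rat).

Definition nbhd (w : T) : {set T} := [set u | e w u].

Lemma in_nbhd w a : (a \in nbhd w) = e w a. Proof. by rewrite inE. Qed.

Lemma sum_const_nbhd w (k : rat) : \sum_(a in nbhd w) k = dg w * k.
Proof. by rewrite sumr_const mulr_natl. Qed.

Lemma sum_const_edges (k : rat) : \sum_(A in E) k = m * k.
Proof. by rewrite sumr_const mulr_natl. Qed.

Lemma edgeP (A : {set T}) :
  reflect (exists x y, e x y /\ A = [set x; y]) (A \in E).
Proof.
rewrite inE; apply: (iffP existsP) => [[x /existsP [y /andP [exy /eqP ->]]]|].
  by exists x, y.
by case=> x [y [exy ->]]; exists x; apply/existsP; exists y; rewrite exy eqxx.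
Qed.

Lemma adj_neq x y : e x y -> x != y.
Proof. by apply: contraTneq => ->; rewrite e_irr. Qed.

Lemma edge_in x y : e x y -> [set x; y] \in E.
Proof. by move=> exy; apply/edgeP; exists x, y. Qed.

Lemma card_edge A : A \in E -> #|A| = 2%N.
Proof. by case/edgeP => x [y [exy ->]]; rewrite cards2 adj_neq. Qed.

Lemma edge_pair A u v :
  A \in E -> u \in A -> v \in A -> u != v -> A = [set u; v].
Proof.
move=> AE uA vA uv; apply/esym/eqP; rewrite eqEcard card_edge // cards2 uv.
by rewrite leqnn andbT; apply/subsetP => z; rewrite !inE => /orP [] /eqP ->.
Qed.

Lemma edge_adj A u v : A \in E -> u \in A -> v \in A -> u != v -> e u v.
Proof.
move=> AE uA vA uv; case/edgeP: AE => x [y [exy Axy]].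
have: u \in [set x; y] /\ v \in [set x; y] by rewrite -Axy.
rewrite !in_set2 => -[/orP [] /eqP ux /orP [] /eqP vx]; subst;
  first [done | by rewrite eqxx in uv | by rewrite e_sym].
Qed.

Lemma edge_meets_self A : A \in E -> ~~ [disjoint A & A].
Proof. by move=> AE; rewrite -setI_eq0 setIid -card_gt0 card_edge. Qed.

Lemma meets_pair (C : {set T}) x y :
  ~~ [disjoint C & [set x; y]] = (x \in C) || (y \in C).
Proof.
rewrite -setI_eq0; apply/set0Pn/idP => [[z]|].
  by rewrite !inE => /andP [zC /orP [] /eqP <-]; rewrite zC ?orbT.
by case/orP => H; [exists x | exists y]; rewrite !inE H eqxx ?orbT.
Qed.

Lemma card_edge_meet A B : A \in E -> B \in E ->
  #|A :&: B| = ((~~ [disjoint A & B]) + (A == B))%N.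
Proof.
move=> AE BE; have [<-|AB] := eqVneq A B.
  by rewrite setIid edge_meets_self // card_edge.
rewrite addn0 -setI_eq0 -cards_eq0.
suff : (#|A :&: B| <= 1)%N by case: #|_| => [|[|]].
rewrite leqNgt; apply/negP => /card_gt1P [u [v [uAB vAB uv]]].
move: uAB vAB; rewrite !inE => /andP [uA uB] /andP [vA vB].
by move: AB; rewrite (edge_pair AE uA vA uv) (edge_pair BE uB vB uv) eqxx.
Qed.

Lemma pick_common (C A : {set T}) :
  ~~ [disjoint C & A] -> exists2 x, x \in C & x \in A.
Proof. by rewrite -setI_eq0 => /set0Pn [x]; rewrite inE => /andP []; exists x. Qed.

Lemma apart_neq (A B : {set T}) x y :
  [disjoint A & B] -> x \in A -> y \in B -> x != y.
Proof.
move=> dAB xA; apply: contraTneq => <-; apply/negP => xB.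
by move: dAB; rewrite -setI_eq0 => /eqP/setP/(_ x); rewrite !inE xA xB.
Qed.

(** Double counting through the stars of the vertices *)

Lemma edges_at w (F : {set T} -> rat) :
  \sum_(A in E | w \in A) F A = \sum_(a in nbhd w) F [set w; a].
Proof.
rewrite -(big_imset _ (h := fun a => [set w; a])) /=; last first.
  move=> a b; rewrite !in_nbhd => ewa ewb Hab.
  have : a \in [set w; b] by rewrite -Hab set22.
  by rewrite in_set2 => /orP [/eqP aw|/eqP //]; move: ewa; rewrite aw e_irr.
apply: eq_bigl => A; apply/andP/imsetP => [[AE wA]|[a]].
  case/edgeP: AE wA => x [y [exy ->]]; rewrite in_set2 => /orP [] /eqP wx.
    by exists y; rewrite ?in_nbhd wx.
  by exists x; rewrite ?in_nbhd wx 1?e_sym // setUC.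
by rewrite in_nbhd => ewa ->; rewrite edge_in // set21.
Qed.

Lemma sum_edge_vertices (H : {set T} -> T -> rat) :
  \sum_(A in E) \sum_(w in A) H A w = \sum_w \sum_(a in nbhd w) H [set w; a] w.
Proof.
under eq_bigr => A _ do rewrite (big_mkcond (fun w => w \in A)) /=.
rewrite exchange_big /=; apply: eq_bigr => w _.
by rewrite -(edges_at w (H^~ w)) big_mkcondr /=; apply: eq_bigr => A _; case: (w \in A).
Qed.

Lemma sum_endpoints (f : T -> rat) :
  \sum_(A in E) \sum_(v in A) f v = \sum_w dg w * f w.
Proof.
by rewrite sum_edge_vertices; apply: eq_bigr => w _; rewrite sum_const_nbhd.
Qed.

(* Every edge is seen twice from the stars of its endpoints. *)
Lemma sum_darts (F : {set T} -> rat) :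
  \sum_w \sum_(a in nbhd w) F [set w; a] = 2 * \sum_(A in E) F A.
Proof.
rewrite -(sum_edge_vertices (fun A _ => F A)) mulr_sumr; apply: eq_bigr => A AE.
by rewrite sumr_const card_edge // mulr_natl.
Qed.

Definition apart (A B : {set T}) : rat := [disjoint A & B]%:R.
Definition meets (A B : {set T}) : rat := (~~ [disjoint A & B])%:R.

Lemma apartC A B : apart A B = apart B A.
Proof. by rewrite /apart disjoint_sym. Qed.

Lemma meetsC A B : meets A B = meets B A.
Proof. by rewrite /meets disjoint_sym. Qed.

Lemma apartE A B : apart A B = 1 - meets A B.
Proof. by rewrite /apart /meets; case: [disjoint _ & _]; rewrite ?subrr ?subr0. Qed.

(* Summing against meets A: the edges meeting A are those seen from the
   stars of its two endpoints, where A itself is seen twice. *)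
Lemma sum_meets A (G : {set T} -> rat) : A \in E ->
  \sum_(B in E) meets A B * G B
  = \sum_(w in A) \sum_(b in nbhd w) G [set w; b] - G A.
Proof.
move=> AE.
have meetsE B : B \in E -> meets A B = \sum_(w in A) (w \in B)%:R - (A == B)%:R.
  move=> BE; apply/eqP; rewrite eq_sym subr_eq -natrD -card_edge_meet //.
  rewrite -sum1_card natr_sum (eq_bigl (fun w => (w \in A) && (w \in B)));
    last by move=> w; rewrite inE.
  by rewrite big_mkcondr /=; apply/eqP; apply: eq_bigr => w _; case: (w \in B).
rewrite (eq_bigr (fun B : {set T} =>
    \sum_(w in A) (w \in B)%:R * G B - (A == B)%:R * G B));
  last by move=> B BE; rewrite meetsE // mulrBl mulr_suml.
rewrite sumrB exchange_big /=; congr (_ - _).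
  apply: eq_bigr => w wA; rewrite -(edges_at w G) big_mkcondr /=.
  by apply: eq_bigr => B _; case: (w \in B); rewrite ?mul1r ?mul0r.
rewrite (bigD1 A) //= eqxx mul1r big1 ?addr0 // => B /andP [_ BA].
by rewrite eq_sym (negbTE BA) mul0r.
Qed.

Definition meet_sum (G : {set T} -> {set T} -> rat) : rat :=
  \sum_(A in E) \sum_(B in E) meets A B * G A B.

Lemma sum_meeting (G : {set T} -> {set T} -> rat) :
  meet_sum G
  = \sum_w \sum_(a in nbhd w) \sum_(b in nbhd w) G [set w; a] [set w; b]
    - \sum_(A in E) G A A.
Proof.
rewrite /meet_sum (eq_bigr (fun A : {set T} =>
    \sum_(w in A) \sum_(b in nbhd w) G A [set w; b] - G A A));
  last by move=> A AE; rewrite (sum_meets (G A) AE).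
by rewrite sumrB
  (sum_edge_vertices (fun (A : {set T}) w => \sum_(b in nbhd w) G A [set w; b])).
Qed.

(* n(A) counts the edges meeting A (A included), c(A,B) the edges meeting
   both A and B; dsum and dprod are the sum and product of the endpoint
   degrees of an edge. *)
Definition nmeet (A : {set T}) : rat := \sum_(B in E) meets A B.
Definition cmeet (A B : {set T}) : rat := \sum_(C in E) meets C A * meets C B.
Definition dsum (A : {set T}) : rat := \sum_(v in A) dg v.
Definition dprod (A : {set T}) : rat := \prod_(v in A) dg v.

Definition nmoment k : rat := \sum_(A in E) nmeet A ^+ k.

Lemma nmeetE A : A \in E -> nmeet A = dsum A - 1.
Proof.
move=> AE; rewrite /nmeet (eq_bigr (fun B => meets A B * 1)) => [|B _];
  last by rewrite mulr1.
rewrite (sum_meets (fun=> 1) AE); congr (_ - _).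
by apply: eq_bigr => w _; rewrite sum_const_nbhd mulr1.
Qed.

Lemma dsum_pair w a : e w a -> dsum [set w; a] = dg w + dg a.
Proof. by move=> ewa; rewrite /dsum sum_pair // adj_neq. Qed.

Lemma dprod_pair w a : e w a -> dprod [set w; a] = dg w * dg a.
Proof. by move=> ewa; rewrite /dprod prod_pair // adj_neq. Qed.

Lemma nmeet_pair w a : e w a -> nmeet [set w; a] = dg w + dg a - 1.
Proof. by move=> ewa; rewrite nmeetE ?edge_in ?dsum_pair. Qed.

Lemma cmeetC A B : cmeet A B = cmeet B A.
Proof. by apply: eq_bigr => C _; rewrite mulrC. Qed.

Lemma cmeet_self A : cmeet A A = nmeet A.
Proof.
apply: eq_bigr => C _; rewrite /meets disjoint_sym.
by case: [disjoint _ & _]; rewrite ?mulr1 ?mulr0.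
Qed.

(** Edge moments in terms of vertex sums *)

(* s(w) = nbr_deg w is the sum of the degrees of the neighbours of w;
   deg2_nbr = sum_w d(w)^2 s(w) and nbr_deg_sq = sum_w s(w)^2 are the two
   vertex sums that cancel in the final identity. *)
Definition nbr_deg (w : T) : rat := \sum_(a in nbhd w) dg a.
Definition deg2_nbr : rat := \sum_w dg w ^+ 2 * nbr_deg w.
Definition nbr_deg_sq : rat := \sum_w nbr_deg w ^+ 2.

Lemma sum_deg_pow k : \sum_w dg w ^+ k = M1pow e k.
Proof. by []. Qed.

Lemma sum_endpoints_pow k : \sum_(A in E) \sum_(v in A) dg v ^+ k = M1pow e k.+1.
Proof. by rewrite sum_endpoints; apply: eq_bigr => w _; rewrite -exprS. Qed.

Lemma sum_dprod : \sum_(A in E) dprod A = M2 e.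
Proof. by []. Qed.

Lemma sum_deg_nbr : \sum_w dg w * nbr_deg w = 2 * M2 e.
Proof.
rewrite -sum_darts; apply: eq_bigr => w _; rewrite /nbr_deg mulr_sumr.
by apply: eq_bigr => a; rewrite in_nbhd => ewa; rewrite prod_pair // adj_neq.
Qed.

Lemma sum_dprod_dsum : \sum_(A in E) dprod A * dsum A = deg2_nbr.
Proof.
rewrite (eq_bigr (fun A : {set T} => \sum_(w in A) dprod A * dg w)) => [|A _];
  last by rewrite /dsum mulr_sumr.
rewrite (sum_edge_vertices (fun (A : {set T}) w => dprod A * dg w)).
apply: eq_bigr => w _.
rewrite /nbr_deg mulr_sumr; apply: eq_bigr => a; rewrite in_nbhd => ewa.
by rewrite dprod_pair //; ring.
Qed.

Lemma dsum_sq A : A \in E -> dsum A ^+ 2 = \sum_(v in A) dg v ^+ 2 + 2 * dprod A.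
Proof.
case/edgeP => x [y [exy ->]].
by rewrite dsum_pair // dprod_pair // sum_pair ?adj_neq //; ring.
Qed.

Lemma dsum_cube A : A \in E ->
  dsum A ^+ 3 = \sum_(v in A) dg v ^+ 3 + 3 * (dprod A * dsum A).
Proof.
case/edgeP => x [y [exy ->]].
by rewrite dsum_pair // dprod_pair // sum_pair ?adj_neq //; ring.
Qed.

Lemma sum_dsum_shift1 c : \sum_(A in E) (dsum A - c) = M1pow e 2 - m * c.
Proof. by rewrite sumrB sum_const_edges (sum_endpoints_pow 1). Qed.

Lemma sum_dsum_shift2 c : \sum_(A in E) (dsum A - c) ^+ 2
  = M1pow e 3 + 2 * M2 e - 2 * c * M1pow e 2 + m * c ^+ 2.
Proof.
rewrite (eq_bigr (fun A : {set T} => (\sum_(v in A) dg v ^+ 2 + 2 * dprod A)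
                            - 2 * c * dsum A + c ^+ 2)) => [|A AE];
  last by rewrite -dsum_sq //; ring.
rewrite !(sumrB, big_split) /= -!mulr_sumr sum_endpoints_pow.
by rewrite (sum_endpoints_pow 1) sum_dprod sum_const_edges; ring.
Qed.

Lemma sum_dsum_shift3 c : \sum_(A in E) (dsum A - c) ^+ 3
  = M1pow e 4 + 3 * deg2_nbr - 3 * c * (M1pow e 3 + 2 * M2 e)
    + 3 * c ^+ 2 * M1pow e 2 - m * c ^+ 3.
Proof.
rewrite (eq_bigr (fun A : {set T} =>
   (\sum_(v in A) dg v ^+ 3 + 3 * (dprod A * dsum A))
   - 3 * c * (\sum_(v in A) dg v ^+ 2 + 2 * dprod A) + 3 * c ^+ 2 * dsum A
   - c ^+ 3))
  => [|A AE]; last by rewrite -dsum_sq // -dsum_cube //; ring.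
rewrite !(sumrB, big_split) /= -!mulr_sumr big_split /= -!mulr_sumr.
rewrite !sum_endpoints_pow (sum_endpoints_pow 1) sum_dprod_dsum sum_dprod.
by rewrite sum_const_edges; ring.
Qed.

Lemma nmoment_shift k : nmoment k = \sum_(A in E) (dsum A - 1) ^+ k.
Proof. by apply: eq_bigr => A AE; rewrite nmeetE. Qed.

Lemma nmoment1 : nmoment 1 = M1pow e 2 - m.
Proof.
rewrite nmoment_shift (eq_bigr (fun A => dsum A - 1)) => [|A _]; last exact: expr1.
by rewrite sum_dsum_shift1 mulr1.
Qed.

Lemma nmoment2 : nmoment 2 = M1pow e 3 + 2 * M2 e - 2 * M1pow e 2 + m.
Proof. by rewrite nmoment_shift sum_dsum_shift2; ring. Qed.

Lemma nmoment3 : nmoment 3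
  = M1pow e 4 + 3 * deg2_nbr - 3 * M1pow e 3 - 6 * M2 e + 3 * M1pow e 2 - m.
Proof. by rewrite nmoment_shift sum_dsum_shift3; ring. Qed.

Lemma star_nmeet w :
  \sum_(a in nbhd w) nmeet [set w; a] = dg w * (dg w - 1) + nbr_deg w.
Proof.
rewrite (eq_bigr (fun a => (dg w - 1) + dg a)) => [|a]; last first.
  by rewrite in_nbhd => ewa; rewrite nmeet_pair //; ring.
by rewrite big_split sum_const_nbhd.
Qed.

Lemma star_edeg w :
  \sum_(a in nbhd w) edeg e [set w; a] = dg w * (dg w - 2) + nbr_deg w.
Proof.
rewrite (eq_bigr (fun a => (dg w - 2) + dg a)) => [|a]; last first.
  by rewrite in_nbhd => ewa; rewrite /edeg sum_pair ?adj_neq //; ring.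
by rewrite big_split sum_const_nbhd.
Qed.

(* Sums over ordered pairs of meeting edges reduce to squares of star sums. *)
Lemma meet_sum_nmeet2 :
  meet_sum (fun A B => nmeet A * nmeet B)
  = M1pow e 4 - 2 * M1pow e 3 + M1pow e 2 + 2 * deg2_nbr - 4 * M2 e
    + nbr_deg_sq - nmoment 2.
Proof.
rewrite sum_meeting /deg2_nbr /nbr_deg_sq; congr (_ - _).
rewrite (eq_bigr (fun w => dg w ^+ 4 - 2 * dg w ^+ 3 + dg w ^+ 2
   + 2 * (dg w ^+ 2 * nbr_deg w) - 2 * (dg w * nbr_deg w) + nbr_deg w ^+ 2));
  last by move=> w _; rewrite -big_distrlr /= star_nmeet; ring.
by rewrite !(sumrB, big_split) /= -!mulr_sumr !sum_deg_pow sum_deg_nbr; ring.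
Qed.

Lemma meet_sum_edeg2 :
  meet_sum (fun A B => edeg e A * edeg e B)
  = M1pow e 4 - 4 * M1pow e 3 + 4 * M1pow e 2 + 2 * deg2_nbr - 8 * M2 e
    + nbr_deg_sq - \sum_(A in E) edeg e A ^+ 2.
Proof.
rewrite sum_meeting /deg2_nbr /nbr_deg_sq; congr (_ - _).
rewrite (eq_bigr (fun w => dg w ^+ 4 - 4 * dg w ^+ 3 + 4 * dg w ^+ 2
   + 2 * (dg w ^+ 2 * nbr_deg w) - 4 * (dg w * nbr_deg w) + nbr_deg w ^+ 2));
  last by move=> w _; rewrite -big_distrlr /= star_edeg; ring.
by rewrite !(sumrB, big_split) /= -!mulr_sumr !sum_deg_pow sum_deg_nbr; ring.
Qed.

(** The index EM2 *)

Definition meeting_pair (p : {set T} * {set T}) : bool :=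
  [&& p.1 \in E, p.2 \in E, p.1 != p.2 & ~~ [disjoint p.1 & p.2]].

Lemma bigcap_pair (A B : {set T}) : \bigcap_(C in [set A; B]) C = A :&: B.
Proof.
have [->|AB] := eqVneq A B; first by rewrite setUid big_set1 setIid.
by rewrite big_setU1 ?big_set1 // inE.
Qed.

Lemma meeting_pair_fiber X Y (g : {set T} * {set T} -> rat) :
  meeting_pair (X, Y) ->
  \sum_(p | meeting_pair p && ([set p.1; p.2] == [set X; Y])) g p
  = g (X, Y) + g (Y, X).
Proof.
case/and4P => /= XE YE XY mXY.
rewrite (eq_bigl (fun p => p \in [set (X, Y); (Y, X)])); last first.
  move=> [A B]; rewrite /meeting_pair /= in_set2 !xpair_eqE.
  apply/idP/idP => [/andP [/and4P [_ _ AB _] /eqP S]|].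
    have : (A \in [set X; Y]) && (B \in [set X; Y]) by rewrite -S set21 set22.
    rewrite !in_set2 => /andP [/orP [] /eqP ? /orP [] /eqP ?]; subst;
      by rewrite ?eqxx ?orbT //; rewrite eqxx in AB.
  case/orP => /andP [/eqP -> /eqP ->]; first by rewrite XE YE XY mXY eqxx.
  by rewrite XE YE eq_sym XY disjoint_sym mXY setUC eqxx.
by rewrite big_setU1 ?big_set1 //= inE xpair_eqE negb_and XY.
Qed.

Lemma EM2_ordered :
  2 * EM2 e = \sum_(p | meeting_pair p) edeg e p.1 * edeg e p.2.
Proof.
rewrite (partition_big (fun p => [set p.1; p.2])
  (fun P => (P \subset E) && (#|P| == 2%N) && (\bigcap_(A in P) A != set0)));
  last first.
  move=> [A B] /and4P [/= AE BE AB mAB].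
  rewrite bigcap_pair setI_eq0 mAB cards2 AB !andbT.
  by apply/subsetP => C; rewrite in_set2 => /orP [] /eqP ->.
rewrite /EM2 mulr_sumr; apply: eq_bigr => P.
case/andP => /andP [sPE /cards2P [X [Y [XY PE]]]]; subst P.
rewrite bigcap_pair setI_eq0.
move=> mXY; have XE : X \in E by apply: (subsetP sPE); rewrite set21.
have YE : Y \in E by apply: (subsetP sPE); rewrite set22.
rewrite (meeting_pair_fiber (fun p => edeg e p.1 * edeg e p.2)) ?prod_pair //=.
  by ring.
by rewrite /meeting_pair XE YE XY.
Qed.

Lemma sum_meets_other A (h : {set T} -> rat) : A \in E ->
  \sum_(B in E) meets A B * h B
  = h A + \sum_(B in E | (A != B) && ~~ [disjoint A & B]) h B.
Proof.
move=> AE; rewrite (bigD1 A) //= /meets edge_meets_self // mul1r; congr (_ + _).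
rewrite big_mkcondr [RHS]big_mkcondr /=; apply: eq_bigr => B _.
by rewrite eq_sym; case: (A != B); case: [disjoint A & B]; rewrite ?mul1r ?mul0r.
Qed.

Lemma EM2_meet_sum : 2 * EM2 e
  = meet_sum (fun A B => edeg e A * edeg e B) - \sum_(A in E) edeg e A ^+ 2.
Proof.
rewrite EM2_ordered.
have -> : \sum_(p | meeting_pair p) edeg e p.1 * edeg e p.2
    = \sum_(A in E) \sum_(B in E | (A != B) && ~~ [disjoint A & B])
        edeg e A * edeg e B.
  rewrite pair_big_dep /=; apply: eq_bigl => p.
  by rewrite /meeting_pair; case: (p.1 \in E); case: (p.2 \in E).
rewrite /meet_sum -sumrB; apply: eq_bigr => A AE.
rewrite (sum_meets_other (fun B => edeg e A * edeg e B) AE).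
by rewrite expr2 addrAC subrr add0r.
Qed.

Lemma EM2_value : 2 * EM2 e = M1pow e 4 - 6 * M1pow e 3 + 12 * M1pow e 2
  + 2 * deg2_nbr - 12 * M2 e + nbr_deg_sq - 8 * m.
Proof.
rewrite EM2_meet_sum meet_sum_edeg2 (eq_bigr (fun A => (dsum A - 2) ^+ 2)) //.
by rewrite sum_dsum_shift2; ring.
Qed.

(** Inclusion-exclusion over pairwise apart edges *)

Lemma apart0 (A B : {set T}) : ~~ [disjoint A & B] -> apart A B = 0.
Proof. by rewrite /apart => /negbTE ->. Qed.

Lemma sum_apart2 A B :
  \sum_(C in E) apart A C * apart B C = m - nmeet A - nmeet B + cmeet A B.
Proof.
rewrite (eq_bigr (fun C => 1 - meets A C - meets B C + meets C A * meets C B));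
  last by move=> C _; rewrite !apartE (meetsC C A) (meetsC C B); ring.
by rewrite !(sumrB, big_split) /= sum_const_edges mulr1.
Qed.

(* An edge has only two endpoints, so it meets at most two of any family of
   pairwise apart edges. *)
Lemma meets3_apart (A1 A2 A3 C : {set T}) :
  [disjoint A1 & A2] -> [disjoint A1 & A3] -> [disjoint A2 & A3] -> C \in E ->
  meets C A1 * meets C A2 * meets C A3 = 0.
Proof.
move=> d12 d13 d23 CE; rewrite /meets.
case: (boolP [disjoint C & A1]) => [_|/pick_common [z1 z1C z1A]];
  first by rewrite !mul0r.
case: (boolP [disjoint C & A2]) => [_|/pick_common [z2 z2C z2A]];
  first by rewrite mulr0 mul0r.
case: (boolP [disjoint C & A3]) => [_|/pick_common [z3 z3C z3A]];
  first by rewrite mulr0.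
move: z3C; rewrite (edge_pair CE z1C z2C (apart_neq d12 z1A z2A)) in_set2.
case/orP => /eqP z3E; subst z3.
  by move: (apart_neq d13 z1A z3A); rewrite eqxx.
by move: (apart_neq d23 z2A z3A); rewrite eqxx.
Qed.

Lemma sum_apart3 (A1 A2 A3 : {set T}) :
  [disjoint A1 & A2] -> [disjoint A1 & A3] -> [disjoint A2 & A3] ->
  \sum_(C in E) apart A1 C * apart A2 C * apart A3 C
  = m - nmeet A1 - nmeet A2 - nmeet A3
    + cmeet A1 A2 + cmeet A1 A3 + cmeet A2 A3.
Proof.
move=> d12 d13 d23.
have no_common : \sum_(C in E) meets C A1 * meets C A2 * meets C A3 = 0.
  by rewrite big1 // => C; apply: meets3_apart.
rewrite (eq_bigr (fun C => 1 - meets A1 C - meets A2 C - meets A3 C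
   + meets C A1 * meets C A2 + meets C A1 * meets C A3 + meets C A2 * meets C A3
   - meets C A1 * meets C A2 * meets C A3)); last first.
  by move=> C _; rewrite !apartE (meetsC C A1) (meetsC C A2) (meetsC C A3); ring.
by rewrite !(sumrB, big_split) /= no_common subr0 sum_const_edges mulr1.
Qed.

Definition apart_triples (F : {set T} -> {set T} -> {set T} -> rat) : rat :=
  \sum_(A in E) \sum_(B in E) \sum_(C in E)
    apart A B * apart A C * apart B C * F A B C.

Definition apart_pairs (G : {set T} -> {set T} -> rat) : rat :=
  \sum_(A in E) \sum_(B in E) apart A B * G A B.

Definition ordered4 : rat :=
  \sum_(A1 in E) \sum_(A2 in E) \sum_(A3 in E) \sum_(A4 in E)
    apart A1 A2 * apart A1 A3 * apart A1 A4 * apart A2 A3 * apart A2 A4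
    * apart A3 A4.

Lemma ordered4_triples : ordered4 = apart_triples (fun A B C =>
  m - nmeet A - nmeet B - nmeet C + cmeet A B + cmeet A C + cmeet B C).
Proof.
apply: eq_bigr => A _; apply: eq_bigr => B _; apply: eq_bigr => C _.
rewrite (eq_bigr (fun D => apart A B * apart A C * apart B C
                           * (apart A D * apart B D * apart C D)));
  last by move=> D _; ring.
rewrite -mulr_sumr.
case: (boolP [disjoint A & B]) => [dAB|/apart0 ->]; last by rewrite !mul0r.
case: (boolP [disjoint A & C]) => [dAC|/apart0 ->]; last by rewrite mulr0 !mul0r.
case: (boolP [disjoint B & C]) => [dBC|/apart0 ->]; last by rewrite mulr0 !mul0r.
by rewrite sum_apart3.
Qed.

Lemma apart_triples_ext F G : (forall A B C, F A B C = G A B C) ->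
  apart_triples F = apart_triples G.
Proof.
move=> FG; apply: eq_bigr => A _; apply: eq_bigr => B _.
by apply: eq_bigr => C _; rewrite FG.
Qed.

Lemma apart_triplesD F G :
  apart_triples (fun A B C => F A B C + G A B C)
  = apart_triples F + apart_triples G.
Proof.
rewrite /apart_triples -big_split; apply: eq_bigr => A _.
rewrite -big_split; apply: eq_bigr => B _.
by rewrite -big_split; apply: eq_bigr => C _ /=; ring.
Qed.

Lemma apart_triplesZ k F :
  apart_triples (fun A B C => k * F A B C) = k * apart_triples F.
Proof.
rewrite /apart_triples mulr_sumr; apply: eq_bigr => A _.
rewrite mulr_sumr; apply: eq_bigr => B _.
by rewrite mulr_sumr; apply: eq_bigr => C _; ring.
Qed.

Lemma apart_triples_swap12 F :
  apart_triples F = apart_triples (fun A B C => F B A C).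
Proof.
rewrite /apart_triples exchange_big; apply: eq_bigr => A _; apply: eq_bigr => B _.
by apply: eq_bigr => C _; rewrite (apartC B A); ring.
Qed.

Lemma apart_triples_swap23 F :
  apart_triples F = apart_triples (fun A B C => F A C B).
Proof.
rewrite /apart_triples; apply: eq_bigr => A _; rewrite exchange_big.
by apply: eq_bigr => B _; apply: eq_bigr => C _; rewrite (apartC C B); ring.
Qed.

(* By symmetry, only three kinds of terms remain. *)
Lemma ordered4_symmetric : ordered4 =
  m * apart_triples (fun _ _ _ => 1) - 3 * apart_triples (fun A _ _ => nmeet A)
  + 3 * apart_triples (fun A B _ => cmeet A B).
Proof.
rewrite ordered4_triples.
have Fsplit A B C : m - nmeet A - nmeet B - nmeet C + cmeet A B + cmeet A C
    + cmeet B C = m * 1 + (-1) * nmeet A + (-1) * nmeet B + (-1) * nmeet C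
    + 1 * cmeet A B + 1 * cmeet A C + 1 * cmeet B C by ring.
rewrite (apart_triples_ext Fsplit).
rewrite !apart_triplesD !apart_triplesZ.
rewrite [apart_triples (fun A B C => nmeet B)]apart_triples_swap12.
rewrite [apart_triples (fun A B C => nmeet C)]apart_triples_swap23.
rewrite [apart_triples (fun A B C => nmeet B)]apart_triples_swap12.
rewrite [apart_triples (fun A B C => cmeet A C)]apart_triples_swap23.
rewrite [apart_triples (fun A B C => cmeet B C)]apart_triples_swap12.
rewrite [apart_triples (fun A B C => cmeet A C)]apart_triples_swap23.
ring.
Qed.

Lemma apart_triples_pairs G :
  apart_triples (fun A B _ => G A B)
  = apart_pairs (fun A B => G A B * (m - nmeet A - nmeet B + cmeet A B)).
Proof.
apply: eq_bigr => A _; apply: eq_bigr => B _.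
rewrite (eq_bigr (fun C => apart A B * G A B * (apart A C * apart B C)));
  last by move=> C _; ring.
by rewrite -mulr_sumr sum_apart2; ring.
Qed.

Lemma apart_pairs_ext G H :
  (forall A B, A \in E -> B \in E -> [disjoint A & B] -> G A B = H A B) ->
  apart_pairs G = apart_pairs H.
Proof.
move=> GH; apply: eq_bigr => A AE; apply: eq_bigr => B BE.
by case: (boolP [disjoint A & B]) => [dAB|/apart0 ->]; rewrite ?mul0r ?GH.
Qed.

Lemma apart_pairsD G H :
  apart_pairs (fun A B => G A B + H A B) = apart_pairs G + apart_pairs H.
Proof.
rewrite /apart_pairs -big_split; apply: eq_bigr => A _.
by rewrite -big_split; apply: eq_bigr => B _ /=; ring.
Qed.

Lemma apart_pairsZ k G :
  apart_pairs (fun A B => k * G A B) = k * apart_pairs G.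
Proof.
rewrite /apart_pairs mulr_sumr; apply: eq_bigr => A _.
by rewrite mulr_sumr; apply: eq_bigr => B _; ring.
Qed.

Lemma apart_pairs_swap G : apart_pairs G = apart_pairs (fun A B => G B A).
Proof.
rewrite /apart_pairs exchange_big; apply: eq_bigr => A _.
by apply: eq_bigr => B _; rewrite apartC.
Qed.

Lemma apart_pairsE G :
  apart_pairs G = \sum_(A in E) \sum_(B in E) G A B - meet_sum G.
Proof.
rewrite /meet_sum -sumrB; apply: eq_bigr => A _.
by rewrite -sumrB; apply: eq_bigr => B _; rewrite apartE; ring.
Qed.

Lemma apart_pairs_one : apart_pairs (fun _ _ => 1) = m * m - nmoment 1.
Proof.
rewrite apart_pairsE; congr (_ - _).
  transitivity (\sum_(A in E) m); last exact: sum_const_edges.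
  by apply: eq_bigr => A _; rewrite sum_const_edges mulr1.
apply: eq_bigr => A _; rewrite expr1.
by apply: eq_bigr => B _; rewrite mulr1.
Qed.

Lemma apart_pairs_nmeet :
  apart_pairs (fun A _ => nmeet A) = m * nmoment 1 - nmoment 2.
Proof.
rewrite apart_pairsE /nmoment mulr_sumr; congr (_ - _).
  by apply: eq_bigr => A _; rewrite sum_const_edges expr1.
by apply: eq_bigr => A _; rewrite -mulr_suml expr2.
Qed.

Lemma apart_pairs_nmeet2 :
  apart_pairs (fun A _ => nmeet A ^+ 2) = m * nmoment 2 - nmoment 3.
Proof.
rewrite apart_pairsE /nmoment mulr_sumr; congr (_ - _).
  by apply: eq_bigr => A _; rewrite sum_const_edges.
by apply: eq_bigr => A _; rewrite -mulr_suml -exprS.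
Qed.

Lemma apart_pairs_nmeet_nmeet : apart_pairs (fun A B => nmeet A * nmeet B)
  = nmoment 1 ^+ 2 - meet_sum (fun A B => nmeet A * nmeet B).
Proof.
by rewrite apart_pairsE /nmoment expr2 big_distrlr.
Qed.

(* Counting the edges meeting both members of a pair through the meeting
   edge first. *)
Lemma apart_pairs_cmeet : apart_pairs (fun A B => cmeet A B)
  = nmoment 2 - meet_sum (fun A B => cmeet A B).
Proof.
rewrite apart_pairsE; congr (_ - _).
rewrite /cmeet (eq_bigr (fun A => \sum_(C in E) \sum_(B in E) meets C A * meets C B));
  last by move=> A _; apply: exchange_big.
rewrite exchange_big; apply: eq_bigr => C _.
by rewrite expr2 /nmeet big_distrlr.
Qed.

Lemma apart_pairs_cmeet_nmeet : apart_pairs (fun A B => cmeet A B * nmeet A)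
  = meet_sum (fun A B => nmeet A * nmeet B)
    - meet_sum (fun A B => cmeet A B * nmeet A).
Proof.
rewrite apart_pairsE; congr (_ - _).
rewrite /cmeet (eq_bigr (fun A => \sum_(C in E) \sum_(B in E)
                                     meets C A * meets C B * nmeet A));
  last by move=> A _; rewrite exchange_big; apply: eq_bigr => B _; rewrite mulr_suml.
rewrite exchange_big; apply: eq_bigr => C _; apply: eq_bigr => A _.
rewrite (eq_bigr (fun B => meets C A * nmeet A * meets C B)); last by move=> B _; ring.
by rewrite -mulr_sumr /nmeet; ring.
Qed.

Lemma weight_one :
  apart_pairs (fun A B => 1 * (m - nmeet A - nmeet B + cmeet A B))
  = m * apart_pairs (fun _ _ => 1) - 2 * apart_pairs (fun A _ => nmeet A)
    + apart_pairs (fun A B => cmeet A B).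
Proof.
have split A B : 1 * (m - nmeet A - nmeet B + cmeet A B)
    = m * 1 + (-1) * nmeet A + (-1) * nmeet B + 1 * cmeet A B by ring.
rewrite (apart_pairs_ext (fun A B _ _ _ => split A B)).
rewrite !apart_pairsD !apart_pairsZ.
by rewrite [apart_pairs (fun A B => nmeet B)]apart_pairs_swap; ring.
Qed.

Lemma weight_nmeet :
  apart_pairs (fun A B => nmeet A * (m - nmeet A - nmeet B + cmeet A B))
  = m * apart_pairs (fun A _ => nmeet A) - apart_pairs (fun A _ => nmeet A ^+ 2)
    - apart_pairs (fun A B => nmeet A * nmeet B)
    + apart_pairs (fun A B => cmeet A B * nmeet A).
Proof.
have split A B : nmeet A * (m - nmeet A - nmeet B + cmeet A B)
    = m * nmeet A + (-1) * nmeet A ^+ 2 + (-1) * (nmeet A * nmeet B)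
      + 1 * (cmeet A B * nmeet A) by ring.
rewrite (apart_pairs_ext (fun A B _ _ _ => split A B)).
by rewrite !apart_pairsD !apart_pairsZ; ring.
Qed.

(** Consequences of girth at least 5 *)

Hypothesis girth5 : girth_ge e 5.

Lemma no_triangle x y z : e x y -> e y z -> e z x -> False.
Proof.
move=> exy eyz ezx; suff : (5 <= 3)%N by [].
apply: girth5; split => //; exists [:: x; y; z]; split => //=.
  rewrite !inE !negb_or (adj_neq exy) (adj_neq eyz) andbT /=.
  by rewrite eq_sym (adj_neq ezx).
by rewrite exy eyz ezx.
Qed.

Lemma no_square x y z t :
  e x y -> e y z -> e z t -> e t x -> x != z -> y != t -> False.
Proof.
move=> exy eyz ezt etx xz yt; suff : (5 <= 4)%N by [].
apply: girth5; split => //; exists [:: x; y; z; t]; split => //=.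
  rewrite !inE !negb_or (adj_neq exy) (adj_neq eyz) (adj_neq ezt) xz yt /=.
  by rewrite eq_sym (adj_neq etx).
by rewrite exy eyz ezt etx.
Qed.

(* Two distinct edges wa, wb are both met exactly by the edges through w,
   since an edge joining a and b would close a triangle. *)
Lemma cmeet_star w a b :
  e w a -> e w b -> a != b -> cmeet [set w; a] [set w; b] = dg w.
Proof.
move=> ewa ewb ab.
have -> : dg w = \sum_(C in E | w \in C) 1.
  by rewrite (edges_at w (fun=> 1)) sum_const_nbhd mulr1.
rewrite /cmeet big_mkcondr /=; apply: eq_bigr => C CE.
rewrite /meets !meets_pair; case wC: (w \in C); rewrite ?mulr1 //=.
case aC: (a \in C); case bC: (b \in C); rewrite ?mulr0 ?mul0r //.
by case: (no_triangle ewa (edge_adj CE aC bC ab)); rewrite e_sym.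
Qed.

(* An edge meeting two apart edges A and B is unique: two of them would
   close a cycle of length 3 or 4. *)
Lemma common_meeter_unique A B C1 C2 :
  A \in E -> B \in E -> [disjoint A & B] -> C1 \in E -> C2 \in E ->
  ~~ [disjoint C1 & A] -> ~~ [disjoint C1 & B] ->
  ~~ [disjoint C2 & A] -> ~~ [disjoint C2 & B] -> C1 = C2.
Proof.
move=> AE BE dAB C1E C2E /pick_common [x1 x1C x1A] /pick_common [y1 y1C y1B]
  /pick_common [x2 x2C x2A] /pick_common [y2 y2C y2B].
have n1 := apart_neq dAB x1A y1B; have n2 := apart_neq dAB x2A y2B.
rewrite (edge_pair C1E x1C y1C n1) (edge_pair C2E x2C y2C n2).
have e1 := edge_adj C1E x1C y1C n1; have e2 := edge_adj C2E x2C y2C n2.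
have [ex|nx] := eqVneq x1 x2; have [ey|ny] := eqVneq y1 y2.
- by rewrite ex ey.
- subst x2; case: (no_triangle e1 (edge_adj BE y1B y2B ny)); by rewrite e_sym.
- subst y2; case: (no_triangle (edge_adj AE x1A x2A nx) e2); by rewrite e_sym.
have e3 : e y2 x2 by rewrite e_sym.
have e4 : e x2 x1 by rewrite e_sym (edge_adj AE x1A x2A nx).
have n3 : y1 != x2 by rewrite eq_sym (apart_neq dAB x2A y1B).
by case: (no_square e1 (edge_adj BE y1B y2B ny) e3 e4 (apart_neq dAB x1A y2B) n3).
Qed.

(* Hence two apart edges have at most one common meeting edge. *)
Lemma cmeet_apart_idem A B : A \in E -> B \in E -> [disjoint A & B] ->
  cmeet A B * cmeet A B = cmeet A B.
Proof.
move=> AE BE dAB.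
set S := [set C in E | ~~ [disjoint C & A] && ~~ [disjoint C & B]].
have -> : cmeet A B = #|S|%:R.
  rewrite -sum1_card natr_sum /cmeet big_mkcond [RHS]big_mkcond /=.
  apply: eq_bigr => C _; rewrite /meets [C \in S]in_set.
  by case: (C \in E); case: [disjoint C & A]; case: [disjoint C & B];
    rewrite ?mulr0 ?mul0r ?mulr1.
suff : (#|S| <= 1)%N by case: #|S| => [|[|]] //; rewrite ?mulr0 ?mulr1.
apply/card_le1_eqP => C1 C2; rewrite [C1 \in S]in_set [C2 \in S]in_set.
move=> /andP [C1E /andP [m1A m1B]] /andP [C2E /andP [m2A m2B]].
exact: (common_meeter_unique AE BE dAB C2E C1E).
Qed.

Lemma weight_cmeet :
  apart_pairs (fun A B => cmeet A B * (m - nmeet A - nmeet B + cmeet A B))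
  = (m + 1) * apart_pairs (fun A B => cmeet A B)
    - 2 * apart_pairs (fun A B => cmeet A B * nmeet A).
Proof.
have split A B : A \in E -> B \in E -> [disjoint A & B] ->
    cmeet A B * (m - nmeet A - nmeet B + cmeet A B)
    = (m + 1) * cmeet A B + (-1) * (cmeet A B * nmeet A)
      + (-1) * (cmeet B A * nmeet B).
  by move=> AE BE dAB; rewrite (cmeetC B A) mulrDr (cmeet_apart_idem AE BE dAB); ring.
rewrite (apart_pairs_ext split) !apart_pairsD !apart_pairsZ.
by rewrite [apart_pairs (fun A B => cmeet B A * nmeet B)]apart_pairs_swap; ring.
Qed.

Lemma cmeet_pair w a b : a \in nbhd w -> b \in nbhd w ->
  cmeet [set w; a] [set w; b] = if a == b then nmeet [set w; a] else dg w.
Proof.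
rewrite !in_nbhd => ewa ewb; case: eqP => [<-|/eqP ab]; first exact: cmeet_self.
exact: cmeet_star.
Qed.

Lemma sum_nbhd_select w a (X Y : rat) : a \in nbhd w ->
  \sum_(b in nbhd w) (if a == b then X else Y) = X + (dg w - 1) * Y.
Proof.
move=> aN; rewrite (eq_bigr (fun b => Y + (a == b)%:R * (X - Y))) => [|b _];
  last by case: (a == b); rewrite ?mul1r ?mul0r; ring.
rewrite big_split /= sum_const_nbhd -mulr_suml.
have -> : \sum_(b in nbhd w) ((a == b)%:R : rat) = 1.
  rewrite (bigD1 a) //= eqxx big1 ?addr0 // => b /andP [_ ba].
  by rewrite eq_sym (negbTE ba).
by ring.
Qed.

Lemma star_cmeet w a : a \in nbhd w ->
  \sum_(b in nbhd w) cmeet [set w; a] [set w; b]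
  = nmeet [set w; a] + (dg w - 1) * dg w.
Proof.
move=> aN; rewrite -(sum_nbhd_select _ _ aN).
by apply: eq_bigr => b bN; rewrite cmeet_pair.
Qed.

Lemma meet_sum_cmeet : meet_sum (fun A B => cmeet A B) = M1pow e 3 - m.
Proof.
rewrite sum_meeting (eq_bigr _ (fun A _ => cmeet_self A)) -/(nmoment 1) nmoment1.
rewrite (eq_bigr (fun w => \sum_(a in nbhd w) nmeet [set w; a]
                           + dg w * ((dg w - 1) * dg w))) => [|w _]; last first.
  by rewrite (eq_bigr _ (@star_cmeet w)) big_split sum_const_nbhd.
rewrite big_split /= sum_darts -/(nmoment 1) nmoment1.
rewrite (eq_bigr (fun w => dg w ^+ 3 - dg w ^+ 2)) => [|w _]; last by ring.
by rewrite sumrB !sum_deg_pow; ring.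
Qed.

Lemma meet_sum_cmeet_nmeet : meet_sum (fun A B => cmeet A B * nmeet A)
  = nmoment 2 + M1pow e 4 - 2 * M1pow e 3 + M1pow e 2 + deg2_nbr - 2 * M2 e.
Proof.
rewrite sum_meeting [X in _ - X](eq_bigr (fun A => nmeet A ^+ 2)) => [|A _];
  last by rewrite cmeet_self expr2.
rewrite (eq_bigr (fun w => \sum_(a in nbhd w) nmeet [set w; a] ^+ 2
    + (dg w - 1) * dg w * (dg w * (dg w - 1) + nbr_deg w))) => [|w _]; last first.
  transitivity (\sum_(a in nbhd w)
    (nmeet [set w; a] ^+ 2 + (dg w - 1) * dg w * nmeet [set w; a])).
    by apply: eq_bigr => a aN; rewrite -mulr_suml star_cmeet //; ring.
  by rewrite big_split /= -mulr_sumr star_nmeet.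
rewrite big_split /= (sum_darts (fun A => nmeet A ^+ 2)) -/(nmoment 2) /deg2_nbr.
rewrite (eq_bigr (fun w => dg w ^+ 4 - 2 * dg w ^+ 3 + dg w ^+ 2
   + (dg w ^+ 2 * nbr_deg w) - (dg w * nbr_deg w))) => [|w _]; last by ring.
by rewrite !(sumrB, big_split) /= -!mulr_sumr !sum_deg_pow sum_deg_nbr; ring.
Qed.

Lemma ordered4_value : ordered4 =
  m ^+ 4 + 6 * m ^+ 3 + 19 * m ^+ 2 + 30 * m - 6 * m ^+ 2 * M1pow e 2
  - 30 * m * M1pow e 2 + 8 * m * M1pow e 3 + 24 * m * M2 e
  + 3 * M1pow e 2 ^+ 2 - 60 * M1pow e 2 + 36 * M1pow e 3 - 6 * M1pow e 4
  + 96 * M2 e - 24 * deg2_nbr - 12 * nbr_deg_sq.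
Proof.
rewrite ordered4_symmetric !apart_triples_pairs /=.
rewrite weight_one weight_nmeet weight_cmeet.
rewrite apart_pairs_one apart_pairs_nmeet apart_pairs_nmeet2.
rewrite apart_pairs_nmeet_nmeet apart_pairs_cmeet apart_pairs_cmeet_nmeet.
rewrite meet_sum_nmeet2 meet_sum_cmeet meet_sum_cmeet_nmeet.
by rewrite nmoment1 nmoment2 nmoment3; ring.
Qed.

(** Ordered quadruples and 4-matchings *)

Definition apart_tuple (f : {ffun 'I_4 -> {set T}}) : bool :=
  [forall i, f i \in E] && [forall i, forall j, (i != j) ==> [disjoint f i & f j]].

(* Their entries are distinct, since an edge is not apart from itself. *)
Lemma apart_tuple_inj f : apart_tuple f -> injective f.
Proof.
case/andP => /forallP fE /forallP fD i j fij; apply/eqP; apply/negPn/negP => ij.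
have := implyP (forallP (fD i) j) ij; rewrite fij.
by rewrite (negbTE (edge_meets_self (fE j))).
Qed.

(* Each 4-matching has 4! orderings. *)
Lemma card_apart_tuples : #|[set f | apart_tuple f]| = (4`! * p_match e 4)%N.
Proof.
rewrite -sum1dep_card (partition_big (fun f : {ffun 'I_4 -> {set T}} => f @: 'I_4)
   (fun M => M \in matchings e 4)) /=; last first.
  move=> f tf; have finj := apart_tuple_inj tf.
  move: tf => /andP [/forallP fE /forallP fD].
  rewrite inE card_imset // card_ord eqxx andbT; apply/andP; split.
    by apply/subsetP => A /imsetP [i _ ->].
  apply/forallP => A; apply/implyP => /imsetP [i _ ->]; apply/forallP => B.
  apply/implyP => /imsetP [j _ ->]; apply/implyP => fij.
  by apply: (implyP (forallP (fD i) j)); apply: contraNneq fij => ->.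
rewrite /p_match mulnC -sum1_card big_distrl /=; apply: eq_bigr => M.
rewrite inE => /andP [/andP [sME /eqP cM] dM]; rewrite mul1n.
have -> : 4`! = #|[set f : {ffun 'I_4 -> {set T}} in ffun_on (mem M) | injectiveb f]|.
  by rewrite card_inj_ffuns_on card_ord cM ffactnn.
rewrite sum1dep_card; apply: eq_card => f; rewrite !inE.
apply/andP/andP => [[tf /eqP imf]|[/ffun_onP fM /injectiveP finj]].
  split; last by apply/injectiveP; exact: apart_tuple_inj.
  by apply/ffun_onP => i; rewrite -imf imset_f.
have fE i : f i \in E by apply: (subsetP sME); exact: fM.
split.
  apply/andP; split; first by apply/forallP.
  apply/forallP => i; apply/forallP => j; apply/implyP => ij.
  have := implyP (forallP (implyP (forallP dM (f i)) (fM i)) (f j)) (fM j).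
  by move/implyP; apply; apply: contra ij => /eqP /finj ->.
rewrite eqEcard card_imset // card_ord cM leqnn andbT.
by apply/subsetP => A /imsetP [i _ ->].
Qed.

Definition tuple_of4 (p : {set T} * {set T} * {set T} * {set T}) :
    {ffun 'I_4 -> {set T}} :=
  [ffun i : 'I_4 => nth set0 [:: p.1.1.1; p.1.1.2; p.1.2; p.2] i].

Definition untuple4 (f : {ffun 'I_4 -> {set T}}) :
    {set T} * {set T} * {set T} * {set T} :=
  (f (inord 0), f (inord 1), f (inord 2), f (inord 3)).

Definition apart4 (a b c d : {set T}) : rat :=
  (apart_tuple (tuple_of4 (a, b, c, d)))%:R.

Lemma tuple_of4K : cancel tuple_of4 untuple4.
Proof. by case=> [[[a b] c] d]; rewrite /untuple4 !ffunE !inordK. Qed.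

Lemma untuple4K : cancel untuple4 tuple_of4.
Proof.
move=> f; apply/ffunP => i; rewrite ffunE /=.
by case: i => [[|[|[|[|k]]]] Hi] //=; congr (f _); apply: val_inj; rewrite /= inordK.
Qed.

Lemma forall_ord4 (P : pred 'I_4) :
  [forall i, P i] = [&& P (inord 0), P (inord 1), P (inord 2) & P (inord 3)].
Proof.
apply/forallP/and4P => [H|[H0 H1 H2 H3] i]; first by rewrite !H.
have -> : i = inord i by apply: val_inj; rewrite /= inordK.
by case: i => [[|[|[|[|k]]]] Hi].
Qed.

Lemma apart_tuple_of4 a b c d :
  apart_tuple (tuple_of4 (a, b, c, d)) =
  [&& a \in E, b \in E, c \in E, d \in E & [&& [disjoint a & b], [disjoint a & c],
     [disjoint a & d], [disjoint b & c], [disjoint b & d] & [disjoint c & d]]].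
Proof.
have inord_eq (i j : nat) : (i < 4)%N -> (j < 4)%N ->
    ((inord i : 'I_4) == inord j) = (i == j).
  by move=> Hi Hj; rewrite -val_eqE /= !inordK.
rewrite /apart_tuple !forall_ord4 !ffunE !inordK // !inord_eq //=.
rewrite (disjoint_sym b a) (disjoint_sym c a) (disjoint_sym d a) (disjoint_sym c b)
  (disjoint_sym d b) (disjoint_sym d c).
case: (a \in E); case: (b \in E); case: (c \in E); case: (d \in E) => //=.
by case: [disjoint a & b]; case: [disjoint a & c]; case: [disjoint a & d];
  case: [disjoint b & c]; case: [disjoint b & d]; case: [disjoint c & d].
Qed.

Lemma ordered4_nested :
  ordered4 = \sum_a \sum_b \sum_c \sum_d apart4 a b c d.
Proof.
rewrite /ordered4 /apart4 big_mkcond; apply: eq_bigr => a _.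
case aE: (a \in E); last first.
  by rewrite big1 // => b _; rewrite big1 // => c _; rewrite big1 // => d _;
    rewrite apart_tuple_of4 aE.
rewrite big_mkcond; apply: eq_bigr => b _; case bE: (b \in E); last first.
  by rewrite big1 // => c _; rewrite big1 // => d _; rewrite apart_tuple_of4 aE bE.
rewrite big_mkcond; apply: eq_bigr => c _; case cE: (c \in E); last first.
  by rewrite big1 // => d _; rewrite apart_tuple_of4 aE bE cE.
rewrite big_mkcond; apply: eq_bigr => d _; case dE: (d \in E); last first.
  by rewrite apart_tuple_of4 aE bE cE dE.
rewrite apart_tuple_of4 aE bE cE dE /= /apart.
by case: [disjoint a & b]; case: [disjoint a & c]; case: [disjoint a & d];
  case: [disjoint b & c]; case: [disjoint b & d]; case: [disjoint c & d];
  rewrite /= ?mulr0 ?mul0r ?mulr1.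
Qed.

Lemma card_apart_tuples_ordered4 :
  (#|[set f | apart_tuple f]|%:R : rat) = ordered4.
Proof.
rewrite -sum1dep_card natr_sum big_mkcond /=.
rewrite (eq_bigr (fun f => ((apart_tuple f)%:R : rat))) => [|f _];
  last by case: (apart_tuple f).
rewrite (reindex tuple_of4) /=; last first.
  by exists untuple4 => f _; [apply: tuple_of4K | apply: untuple4K].
rewrite ordered4_nested (eq_bigr (fun p => apart4 p.1.1.1 p.1.1.2 p.1.2 p.2));
  last by case=> [[[]]].
rewrite -(pair_bigA _ (fun q d => apart4 q.1.1 q.1.2 q.2 d)) /=.
rewrite -(pair_bigA _ (fun r c => \sum_d apart4 r.1 r.2 c d)) /=.
by rewrite -(pair_bigA _ (fun a b => \sum_c \sum_d apart4 a b c d)).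
Qed.

End FourMatchings.

Unset Implicit Arguments.

Theorem theorem2p9 (T : finType) (e : rel T)
  (e_sym : symmetric e) (e_irr : irreflexive e)
  (girth5 : girth_ge e 5) :
  let m : rat := (nedges e)%:R in
  ((p_match e 4)%:R : rat) =
    m ^+ 4 / 24%:R + m ^+ 3 / 4%:R + 19%:R * m ^+ 2 / 24%:R - 11%:R * m / 4%:R
    + (M1 e) ^+ 2 / 8%:R + m * Fidx e / 3%:R - m ^+ 2 * M1 e / 4%:R
    + m * M2 e + M14 e / 4%:R - 2%:R * M2 e - 5%:R * m * M1 e / 4%:R
    + 7%:R * M1 e / 2%:R - EM2 e - 3%:R * Fidx e / 2%:R.
Proof.
move=> m.
have p4E : (p_match e 4)%:R = ordered4 e / 24%:R.
  rewrite -card_apart_tuples_ordered4 // card_apart_tuples // natrM.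
  by rewrite (_ : 4`! = 24)%N //; field.
have EM2E : EM2 e = (2 * EM2 e) / 2 by field.
rewrite p4E ordered4_value // EM2E EM2_value // /m /M1 /Fidx /M14.
by field.
Qed.
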